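(* Let $L$ be a multisorted algebra in the quantifier-free signature. Then $L$ satisfies axioms (0)–(6) if and only if $L$ is isomorphic to a subalgebra of the quantifier-free algebra $A(W)$ of some set $W$.
   Context: Throughout, the Boolean prime ideal theorem is assumed. Signature. There is a sort $n$ for each natural number $n\ge 0$. For every function $\alpha\colon\{1,\dots,n\}\to\{1,\dots,k\}$ there is a unary function symbol (''substitution'') $\alpha\colon n\to k$ (argument of sort $n$, value of sort $k$). For each sort there are constants $0,1$, binary operations $\vee,\wedge$ and a unary operation $\neg$. This is the quantifier-free signature. For substitutions $\alpha\colon k\to n$, $\beta\colon n\to m$, $\beta\circ\alpha\colon k\to m$ is the substitution symbol of the composite function, while $\beta(\alpha(r))$ is composition inside an algebra; $\mathrm{id}\colon n\to n$ is the identity substitution. Concrete algebras. For a set $W$ and substitution $\alpha\colon\{1,\dots,n\}\to\{1,\dots,k\}$: $\alpha^{\mathrm{tuple}}(x_1,\dots,x_k)=(x_{\alpha(1)},\dots,x_{\alpha(n)})$ and $\alpha^{\mathrm{relation}}(r)=\{\bar x\in W^k:\alpha^{\mathrm{tuple}}(\bar x)\in r\}$ for $r\subseteq W^n$. The quantifier-free algebra $A(W)$ interprets sort $n$ as $\mathcal P(W^n)$, $\alpha$ as $\alpha^{\mathrm{relation}}$, and $0,1,\vee,\wedge,\neg$ as $\emptyset,W^n,\cup,\cap$, complement in $W^n$. Partitioning cylindrifications: given $k_1,\dots,k_m$ and $n=\sum k_j$, the substitutions $c_i\colon k_i\to n$, $c_i(l)=l+\sum_{j<i}k_j$. In an algebra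 $x\le y$ (also $y\ge x$) means $x=x\wedge y$. Axioms: (0) For all partitioning cylindrifications $c_1,\dots,c_m$ and all $r_i,s_i$ of sort $k_i$: if $\bigvee_i c_i(s_i)\ge\bigwedge_i c_i(r_i)$ then $s_i\ge r_i$ for some $i$ (including $m=0$: $0\ge1$ fails in sort $0$). (1) Each sort is a bounded distributive lattice under $0,1,\vee,\wedge$. (2) Every substitution preserves $0,1,\vee,\wedge$. (3) $(\beta\circ\alpha)(r)=\beta(\alpha(r))$. (4) $\mathrm{id}(r)=r$. (5) $\alpha(\neg r)=\neg\alpha(r)$ for every substitution $\alpha$. (6) $r\vee\neg r=1$ and $r\wedge\neg r=0$ in every sort. *)

From mathcomp Require Import all_boot.
Set Implicit Arguments. Unset Strict Implicit. Unset Printing Implicit Defensive.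

(* Sorts are natural numbers n; sort n is indexed by the variable set 'I_n
   (0-based version of {1,...,n}).  A substitution symbol alpha : n -> k is a
   finite function {ffun 'I_n -> 'I_k}. *)

Record qfalg := QFAlg {
  car  : nat -> Type;
  subst : forall n k : nat, {ffun 'I_n -> 'I_k} -> car n -> car k;
  zero : forall n, car n;
  one  : forall n, car n;
  join : forall n, car n -> car n -> car n;
  meet : forall n, car n -> car n -> car n;
  neg  : forall n, car n -> car n
}.

Arguments subst {q n k}.
Arguments zero q n : clear implicits.
Arguments one q n : clear implicits.
Arguments join {q n}.
Arguments meet {q n}.
Arguments neg {q n}.

Definition scomp n k m (beta : {ffun 'I_k -> 'I_m}) (alpha : {ffun 'I_n -> 'I_k})
  : {ffun 'I_n -> 'I_m} := [ffun i => beta (alpha i)].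
Definition sid n : {ffun 'I_n -> 'I_n} := [ffun i => i].

Definition le (L : qfalg) n (x y : car L n) : Prop := x = meet x y.

Definition bigjoin (L : qfalg) n (xs : seq (car L n)) : car L n :=
  foldr (@join L n) (zero L n) xs.
Definition bigmeet (L : qfalg) n (xs : seq (car L n)) : car L n :=
  foldr (@meet L n) (one L n) xs.

Definition offset m (k : 'I_m -> nat) (i : 'I_m) : nat :=
  \sum_(j < m | (j < i)%N) k j.

Lemma offset_le m (k : 'I_m -> nat) (i : 'I_m) :
  (offset k i <= \sum_(j < m | j != i) k j)%N.
Proof.
rewrite /offset (big_mkcond (fun j : 'I_m => (j < i)%N))
  (big_mkcond (fun j : 'I_m => j != i)) /=.
apply: leq_sum => j _; case: ifP => // h.
by rewrite -val_eqE /= (ltn_eqF h).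
Qed.

Lemma cyl_lt m (k : 'I_m -> nat) (i : 'I_m) (l : 'I_(k i)) :
  (l + offset k i < \sum_(j < m) k j)%N.
Proof.
rewrite (bigD1 i) //=.
apply: (@leq_trans (k i + offset k i)); first by rewrite ltn_add2r.
by rewrite leq_add2l offset_le.
Qed.

Definition cyl m (k : 'I_m -> nat) (i : 'I_m) : {ffun 'I_(k i) -> 'I_(\sum_(j < m) k j)} :=
  [ffun l => Ordinal (cyl_lt l)].

Definition ax0 (L : qfalg) : Prop :=
  forall (m : nat) (k : 'I_m -> nat) (r s : forall i : 'I_m, car L (k i)),
    le (bigmeet [seq subst (@cyl m k i) (r i) | i <- enum 'I_m])
       (bigjoin [seq subst (@cyl m k i) (s i) | i <- enum 'I_m]) ->
    exists i : 'I_m, le (r i) (s i).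

Definition ax1 (L : qfalg) : Prop :=
  forall n (x y z : car L n),
    [/\ join x (join y z) = join (join x y) z,
        meet x (meet y z) = meet (meet x y) z,
        join x y = join y x &
        meet x y = meet y x] /\
     [/\ join x (meet x y) = x,
        meet x (join x y) = x,
        meet x (join y z) = join (meet x y) (meet x z),
        join x (zero L n) = x &
        meet x (one L n) = x].

Definition ax2 (L : qfalg) : Prop :=
  forall n k (alpha : {ffun 'I_n -> 'I_k}) (x y : car L n),
    [/\ subst alpha (zero L n) = zero L k,
        subst alpha (one L n) = one L k,
        subst alpha (join x y) = join (subst alpha x) (subst alpha y) &
        subst alpha (meet x y) = meet (subst alpha x) (subst alpha y)].

Definition ax3 (L : qfalg) : Prop :=
  forall n k m (alpha : {ffun 'I_n -> 'I_k}) (beta : {ffun 'I_k -> 'I_m}) (r : car L n),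
    subst (scomp beta alpha) r = subst beta (subst alpha r).

Definition ax4 (L : qfalg) : Prop :=
  forall n (r : car L n), subst (sid n) r = r.

Definition ax5 (L : qfalg) : Prop :=
  forall n k (alpha : {ffun 'I_n -> 'I_k}) (r : car L n),
    subst alpha (neg r) = neg (subst alpha r).

Definition ax6 (L : qfalg) : Prop :=
  forall n (r : car L n), join r (neg r) = one L n /\ meet r (neg r) = zero L n.

Definition qf_axioms (L : qfalg) : Prop :=
  [/\ ax0 L, ax1 L, ax2 L, ax3 L & [/\ ax4 L, ax5 L & ax6 L]].

(* The quantifier-free algebra A(W): sort n is the set of relations on W^n,
   W^n = 'I_n -> W, relations as predicates. *)
Definition rel_of (W : Type) (n : nat) : Type := ('I_n -> W) -> Prop.

Definition A (W : Type) : qfalg :=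
  @QFAlg (rel_of W)
    (fun n k alpha r => fun x : 'I_k -> W => r (fun i : 'I_n => x (alpha i)))
    (fun n _ => False)
    (fun n _ => True)
    (fun n r s x => r x \/ s x)
    (fun n r s x => r x /\ s x)
    (fun n r x => ~ r x).

Definition is_hom (L M : qfalg) (h : forall n, car L n -> car M n) : Prop :=
  [/\ forall n k (alpha : {ffun 'I_n -> 'I_k}) (x : car L n),
        h k (subst alpha x) = subst alpha (h n x),
      forall n, h n (zero L n) = zero M n,
      forall n, h n (one L n) = one M n,
      forall n (x y : car L n), h n (join x y) = join (h n x) (h n y) &
    [/\ forall n (x y : car L n), h n (meet x y) = meet (h n x) (h n y) &
      forall n (x : car L n), h n (neg x) = neg (h n x)]].

(* L is isomorphic to a subalgebra of M: there is an injective homomorphism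
   (its image is then a subalgebra isomorphic to L). *)
Definition embeds (L M : qfalg) : Prop :=
  exists h : forall n, car L n -> car M n,
    is_hom h /\ forall n, injective (h n).

(* The axioms hold in every A(W) and pass to subalgebras; axiom (0) because a
   tuple can be assembled from independent witnesses on disjoint blocks of
   variables.  Conversely, let W consist of the variables of all nonzero
   elements ("blocks") of L.  For a finite family of blocks, axiom (0) says that
   the meet of their cylindrifications onto disjoint variables is nonzero, so it
   lies in an ultrafilter of the corresponding sort; a tuple of points of these
   blocks satisfies r if the image of r under the substitution sending each
   point to its slot lies in that ultrafilter.  Taking an ultraproduct over the directed set
   of finite families makes this independent of the family and turns
   r |-> {x | x satisfies r} into a homomorphism into A(W).  It is injective
   since a nonzero r /\ ~s is satisfied by the tuple of its own variables. *)

From Pilot Require Import Defs.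
From mathcomp Require Import all_boot boolp classical_sets zify.
From Stdlib Require Import Lia.
Set Implicit Arguments. Unset Strict Implicit. Unset Printing Implicit Defensive.

Notation zero := Defs.zero.
Notation one := Defs.one.

Record boolean_algebra (B : Type) (cap cup : B -> B -> B) (compl : B -> B)
    (bot top : B) : Prop := BooleanAlgebra {
  cupA : forall x y z, cup x (cup y z) = cup (cup x y) z;
  capA : forall x y z, cap x (cap y z) = cap (cap x y) z;
  cupC : forall x y, cup x y = cup y x;
  capC : forall x y, cap x y = cap y x;
  cupKI : forall x y, cup x (cap x y) = x;
  capKU : forall x y, cap x (cup x y) = x;
  capUr : forall x y z, cap x (cup y z) = cup (cap x y) (cap x z);
  cupx0 : forall x, cup x bot = x;
  capx1 : forall x, cap x top = x;
  cupxC : forall x, cup x (compl x) = top;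
  capxC : forall x, cap x (compl x) = bot }.

Section BooleanAlgebraTheory.
Variables (B : Type) (cap cup : B -> B -> B) (compl : B -> B) (bot top : B).
Hypothesis hB : boolean_algebra cap cup compl bot top.

Local Notation sub x y := (x = cap x y).

Lemma capxx x : cap x x = x.
Proof. by rewrite -{2}(cupKI hB x top) (capx1 hB) (capKU hB). Qed.

Lemma capx0 x : cap x bot = bot.
Proof. by rewrite -(capxC hB x) (capA hB) capxx. Qed.

Lemma sub_refl x : sub x x. Proof. by rewrite capxx. Qed.

Lemma sub_trans x y z : sub x y -> sub y z -> sub x z.
Proof. by move=> xy yz; rewrite {1}xy yz (capA hB) -xy. Qed.

Lemma sub_cap x y z : sub x y -> sub x z -> sub x (cap y z).
Proof. by move=> xy xz; rewrite (capA hB) -xy -xz. Qed.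

Lemma sub_capl x y : sub (cap x y) x.
Proof. by rewrite -(capA hB) (capC hB y x) (capA hB) capxx. Qed.

Lemma sub_capr x y : sub (cap x y) y.
Proof. by rewrite -(capA hB) capxx. Qed.

Lemma sub_cupl x y : sub x (cup x y).
Proof. by rewrite (capKU hB). Qed.

Lemma sub_top x : sub x top.
Proof. by rewrite (capx1 hB). Qed.

Lemma sub_bot x : sub x bot -> x = bot.
Proof. by rewrite capx0. Qed.

Lemma cap_compl_eq0_sub x y : cap x (compl y) = bot -> sub x y.
Proof.
by move=> e; rewrite -{1}(capx1 hB x) -(cupxC hB y) (capUr hB) e (cupx0 hB).
Qed.

Lemma cap_eq0_split f g x : cap f x = bot -> cap g (compl x) = bot ->
  cap f g = bot.
Proof.
move=> fx gx; rewrite -(capx1 hB (cap f g)) -(cupxC hB x) (capUr hB).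
have -> : cap (cap f g) x = bot by rewrite (capC hB f) -(capA hB) fx capx0.
by rewrite -(capA hB) gx !capx0 (cupx0 hB).
Qed.

Lemma neq_cap_compl r s : r <> s -> cap r (compl s) <> bot \/ cap s (compl r) <> bot.
Proof.
move=> rs; case: (EM (cap r (compl s) = bot)) => [/cap_compl_eq0_sub e1|]; last by left.
case: (EM (cap s (compl r) = bot)) => [/cap_compl_eq0_sub e2|]; last by right.
by case: rs; rewrite e1 {2}e2 (capC hB).
Qed.

Definition is_filter (F : B -> Prop) :=
  [/\ F top, forall x y, F x -> F y -> F (cap x y) & forall x y, F x -> sub x y -> F y].

Definition is_ultrafilter (U : B -> Prop) :=
  [/\ is_filter U, ~ U bot & forall x, U x \/ U (compl x)].

Section Ultrafilter.
Variable U : B -> Prop.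
Hypothesis hU : is_ultrafilter U.

Lemma ultra_up x y : U x -> sub x y -> U y.
Proof. by case: hU => [[_ _ Uup]] _ _; exact: Uup. Qed.

Lemma ultra_top : U top. Proof. by case: hU => [[]]. Qed.

Lemma ultra_bot : ~ U bot. Proof. by case: hU. Qed.

Lemma ultra_capE x y : U (cap x y) <-> U x /\ U y.
Proof.
split=> [Uxy|[Ux Uy]]; last by case: hU => [[_ Ucap _]] _ _; exact: Ucap.
by split; apply: ultra_up Uxy _; [apply: sub_capl|apply: sub_capr].
Qed.

Lemma ultra_complE x : U (compl x) <-> ~ U x.
Proof.
split=> [Ux' Ux|]; last by case: hU => _ _ /(_ x) [].
by apply: ultra_bot; rewrite -(capxC hB x); apply/ultra_capE.
Qed.

Lemma ultra_cupE x y : U (cup x y) <-> U x \/ U y.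
Proof.
split=> [Uxy|]; last first.
  by case=> [Ux|Uy]; [|rewrite (cupC hB)]; apply: ultra_up (sub_cupl _ _).
apply: contrapT => /not_orP[/ultra_complE Ux' /ultra_complE Uy'].
apply: ultra_bot; suff <- : cap (cap (compl x) (compl y)) (cup x y) = bot.
  by apply/ultra_capE; split => //; apply/ultra_capE.
have e1 : cap (cap (compl x) (compl y)) x = bot.
  by rewrite (capC hB (compl x)) -(capA hB) (capC hB _ x) (capxC hB) capx0.
have e2 : cap (cap (compl x) (compl y)) y = bot.
  by rewrite -(capA hB) (capC hB _ y) (capxC hB) capx0.
by rewrite (capUr hB) e1 e2 (cupx0 hB).
Qed.

End Ultrafilter.

Section UltrafilterExtension.
Variable F : B -> Prop.
Hypotheses (filterF : is_filter F) (properF : ~ F bot).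

Definition proper_filter_above (G : B -> Prop) :=
  [/\ forall x, F x -> G x, is_filter G & ~ G bot].

Lemma maximal_filter_disjoint (G : B -> Prop) : proper_filter_above G ->
  (forall G', proper_filter_above G' -> (forall x, G x -> G' x) ->
     forall x, G' x -> G x) ->
  forall x, ~ G x -> exists2 f, G f & cap f x = bot.
Proof.
move=> [FG [G1 Gcap Gup] G0] Gmax x Gx'.
pose G' y := exists2 f, G f & sub (cap f x) y.
have [[f Gf /sub_bot fx0]|G'0] := EM (G' bot); first by exists f.
case: Gx'; apply: (Gmax G'); last by exists top => //; exact: sub_capr.
- split=> //; first by move=> y /FG Gy; exists y; last exact: sub_capl.
  split; first by exists top; last exact: sub_top.
  + move=> y z [f Gf fy] [g Gg gz]; exists (cap f g); first exact: Gcap.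
    apply: sub_cap; [apply: sub_trans fy|apply: sub_trans gz];
      apply: sub_cap (sub_capr _ _); apply: sub_trans (sub_capl _ _) _;
      [exact: sub_capl|exact: sub_capr].
  + by move=> y z [f Gf fy] yz; exists f; last exact: sub_trans yz.
- by move=> y Gy; exists y; last exact: sub_capl.
Qed.

Lemma chain_union_filter (A : (B -> Prop) -> Prop) :
  (forall G, A G -> proper_filter_above G) ->
  (forall G G', A G -> A G' -> (forall x, G x -> G' x) \/ (forall x, G' x -> G x)) ->
  proper_filter_above (fun x => F x \/ exists2 G, A G & G x).
Proof.
move=> AP Atot; have [F1 Fcap Fup] := filterF.
have FG G x : A G -> F x -> G x by move=> /AP[FG _ _] /FG.
have Gcap G x y : A G -> G x -> G y -> G (cap x y).
  by move=> /AP[_ [_ Gcap _] _]; apply: Gcap.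
split; first by move=> x; left.
- split; first by left.
  + move=> x y [Fx|[G AG Gx]] [Fy|[G' AG' Gy]]; first by left; apply: Fcap.
    * by right; exists G' => //; apply: Gcap (FG _ _ _ Fx) Gy.
    * by right; exists G => //; apply: Gcap Gx (FG _ _ _ Fy).
    * right; have [GG'|G'G] := Atot G G' AG AG'.
        by exists G' => //; apply: Gcap (GG' _ Gx) Gy.
      by exists G => //; apply: Gcap Gx (G'G _ Gy).
  + move=> x y [Fx|[G AG Gx]] xy; first by left; apply: Fup xy.
    by right; exists G => //; have [_ [_ _ Gup] _] := AP G AG; apply: Gup xy.
- by case=> [//|[G /AP[_ _ G0]]].
Qed.

Lemma ultrafilter_ext : exists2 U, is_ultrafilter U & forall x, F x -> U x.
Proof.
pose T := {G : B -> Prop | proper_filter_above G}.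
pose R (G G' : T) : bool := `[< forall x, sval G x -> sval G' x >].
have PF : proper_filter_above F by [].
have [[G PG] Gmax] : exists G : T, premaximal R G.
  apply: (ZL_preorder (exist _ F PF)).
  - by move=> G; apply/asboolP.
  - by move=> G1 G2 G3 /asboolP h12 /asboolP h23; apply/asboolP => x /h12 /h23.
  - move=> A Atot.
    pose A' G := exists2 H : T, A H & sval H = G.
    have PU : proper_filter_above (fun x => F x \/ exists2 G, A' G & G x).
      apply: chain_union_filter => [_ [H _ <-]|_ _ [H AH <-] [H' AH' <-]].
        exact: svalP.
      by case: (Atot H H' AH AH') => /asboolP; [left|right].
    exists (exist _ _ PU) => H AH; apply/asboolP => x Hx /=.
    by right; exists (sval H) => //; exists H.
have {}Gmax G' : proper_filter_above G' -> (forall x, G x -> G' x) ->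
    forall x, G' x -> G x.
  by move=> PG' GG'; move/asboolP: (Gmax (exist _ G' PG') (introT (asboolP _) GG')).
have [FG [G1 Gcap Gup] G0] := PG.
exists G => //; split=> // x; apply: contrapT => /not_orP[Gx Gx'].
have [f Gf fx] := maximal_filter_disjoint PG Gmax Gx.
have [g Gg gx'] := maximal_filter_disjoint PG Gmax Gx'.
by apply: G0; rewrite -(cap_eq0_split fx gx'); apply: Gcap.
Qed.
End UltrafilterExtension.

Lemma ultrafilter_of_neq0 u : u <> bot -> exists2 U, is_ultrafilter U & U u.
Proof.
move=> u0; have filter_u : is_filter (fun x => sub u x).
  by split; [exact: sub_top|exact: sub_cap|move=> x y; apply: sub_trans].
have [U ultraU uU] := ultrafilter_ext filter_u (fun e => u0 (sub_bot e)).
by exists U => //; apply: uU; apply: sub_refl.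
Qed.

End BooleanAlgebraTheory.

Section Cylindrification.
Variables (m : nat) (k : 'I_m -> nat).

Lemma offset_addn_le (i i' : 'I_m) : (i < i')%N -> (offset k i + k i <= offset k i')%N.
Proof.
move=> lt_ii'; rewrite [offset k i'](bigD1 i) //= addnC leq_add2l /offset.
rewrite (big_mkcond (fun j : 'I_m => (j < i)%N)).
rewrite (big_mkcond (fun j : 'I_m => (j < i')%N && (j != i))) /=.
apply: leq_sum => j _; case: ifP => // lt_ji.
by rewrite (ltn_trans lt_ji lt_ii') -val_eqE /= (ltn_eqF lt_ji).
Qed.

Lemma cyl_inj (i i' : 'I_m) (l : 'I_(k i)) (l' : 'I_(k i')) :
  cyl k i l = cyl k i' l' -> Tagged (fun i => 'I_(k i)) l = Tagged _ l'.
Proof.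
move=> /(congr1 val); rewrite !ffunE /= => e.
case: (ltngtP i i') => [lt_ii'|lt_i'i|/val_inj eq_ii'].
- by have := offset_addn_le lt_ii'; have := ltn_ord l; lia.
- by have := offset_addn_le lt_i'i; have := ltn_ord l'; lia.
- by subst i'; congr Tagged; apply: val_inj => /=; lia.
Qed.

Lemma cyl_surj (p : 'I_(\sum_(j < m) k j)) :
  exists s : {i : 'I_m & 'I_(k i)}, cyl k (tag s) (tagged s) = p.
Proof.
pose F (s : {i : 'I_m & 'I_(k i)}) := cyl k (tag s) (tagged s).
have injF : injective F by move=> [i l] [i' l'] /cyl_inj.
have leF : (#|'I_(\sum_(j < m) k j)| <= #|{: {i : 'I_m & 'I_(k i)}}|)%N.
  rewrite card_tagged card_ord sumnE big_map.
  by under eq_bigr do rewrite card_ord; rewrite big_enum.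
by have /codomP [s ->] := inj_card_onto injF leF p; exists s.
Qed.
End Cylindrification.

Section RelationAlgebra.
Variable W : Type.

Lemma A_leP n (x y : car (A W) n) : le x y <-> forall w, x w -> y w.
Proof.
split=> [-> w []//|xy]; apply: funext => w /=.
by apply: propext; split=> [xw|[]//]; split=> //; apply: xy.
Qed.

Lemma A_bigmeet_mapE n (I : eqType) (s : seq I) (F : I -> car (A W) n) w :
  bigmeet [seq F i | i <- s] w <-> forall i, i \in s -> F i w.
Proof.
elim: s => [|i s IH] //=; rewrite IH; split=> [[Fiw Fsw] j|Fw].
  by rewrite in_cons => /orP[/eqP->|/Fsw].
by split=> [|j js]; apply: Fw; rewrite in_cons ?eqxx ?js ?orbT.
Qed.

Lemma A_bigjoin_mapE n (I : eqType) (s : seq I) (F : I -> car (A W) n) w :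
  bigjoin [seq F i | i <- s] w <-> exists2 i, i \in s & F i w.
Proof.
elim: s => [|i s IH] /=; first by split=> // [[]].
rewrite IH; split=> [[Fiw|[j js Fjw]]|[j]]; first by exists i; rewrite ?mem_head.
  by exists j; rewrite // in_cons js orbT.
by rewrite in_cons => /orP[/eqP->|js Fjw]; [left|right; exists j].
Qed.

Lemma A_ax0 : ax0 (A W).
Proof.
move=> m k r s /A_leP rs; apply: contrapT => /forallNP nrs.
have witness i : exists x, r i x /\ ~ s i x.
  apply: contrapT => /forallNP nx; apply: (nrs i).
  by apply/A_leP => x rix; apply: contrapT => sx; apply: (nx x).
pose x i := sval (cid (witness i)); have rx i := svalP (cid (witness i)).
pose xt (p : {i : 'I_m & 'I_(k i)}) := x (tag p) (tagged p).
pose w p := xt (sval (cid (cyl_surj p))).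
have wE i : (fun l => w (cyl k i l)) = x i.
  by apply: funext => l; rewrite /w; case: cid => -[i' l'] /= /cyl_inj /(f_equal xt).
have /rs /A_bigjoin_mapE [i _] : bigmeet [seq subst (cyl k i) (r i) | i <- enum 'I_m] w.
  by apply/A_bigmeet_mapE => i _ /=; rewrite wE; case: (rx i).
by rewrite /= wE; case: (rx i).
Qed.

Lemma A_qf_axioms : qf_axioms (A W).
Proof.
have predE n (P Q : ('I_n -> W) -> Prop) : (forall w, P w <-> Q w) -> P = Q.
  by move=> PQ; apply: funext => w; apply: propext.
split; [exact: A_ax0| | | |split].
- by move=> n x y z; split; split; apply: predE => w /=; tauto.
- by move=> n k alpha x y; split; apply: predE => w /=; tauto.
- move=> n k m alpha beta r; apply: funext => w /=.
  by congr r; apply: funext => i; rewrite ffunE.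
- move=> n r; apply: funext => w /=.
  by congr r; apply: funext => i; rewrite ffunE.
- by move=> n k alpha r; apply: predE.
- by move=> n r; split; apply: predE => w /=; [split=> // _; apply: EM|tauto].
Qed.
End RelationAlgebra.

Section Embedding.
Variables (L M : qfalg) (h : forall n, car L n -> car M n).
Arguments h : clear implicits.
Hypotheses (hom_h : is_hom h) (inj_h : forall n, injective (h n)).

Let h_subst (n k : nat) (alpha : {ffun 'I_n -> 'I_k}) (x : car L n) :
  h k (subst alpha x) = subst alpha (h n x).
Proof. by case: hom_h. Qed.

Let h0 (n : nat) : h n (zero L n) = zero M n.
Proof. by case: hom_h. Qed.

Let h1 (n : nat) : h n (one L n) = one M n.
Proof. by case: hom_h. Qed.

Let hU (n : nat) (x y : car L n) : h n (join x y) = join (h n x) (h n y).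
Proof. by case: hom_h. Qed.

Let hI (n : nat) (x y : car L n) : h n (meet x y) = meet (h n x) (h n y).
Proof. by case: hom_h => _ _ _ _ []. Qed.

Let hN (n : nat) (x : car L n) : h n (neg x) = neg (h n x).
Proof. by case: hom_h => _ _ _ _ []. Qed.

Let homE := (h_subst, h0, h1, hU, hI, hN).

Lemma hom_leE n (x y : car L n) : le (h n x) (h n y) <-> le x y.
Proof. by rewrite /le -hI; split=> [/inj_h|/(congr1 (h n))]. Qed.

Lemma hom_bigmeet n (xs : seq (car L n)) : h n (bigmeet xs) = bigmeet (map (h n) xs).
Proof. by elim: xs => [|x xs IH] /=; rewrite ?h1 // hI IH. Qed.

Lemma hom_bigjoin n (xs : seq (car L n)) : h n (bigjoin xs) = bigjoin (map (h n) xs).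
Proof. by elim: xs => [|x xs IH] /=; rewrite ?h0 // hU IH. Qed.

Lemma hom_qf_axioms : qf_axioms M -> qf_axioms L.
Proof.
move=> [M0 M1 M2 M3 [M4 M5 M6]]; split; last split.
- move=> m k r s; pose cyls (Q : qfalg) (F : forall i, car Q (k i)) :=
    [seq subst (cyl k i) (F i) | i <- enum 'I_m].
  have hom_cyls F : map (h _) (cyls L F) = cyls M (fun i => h _ (F i)).
    by rewrite -map_comp; apply: eq_map => i /=; rewrite h_subst.
  rewrite -hom_leE hom_bigmeet hom_bigjoin -/(cyls L r) -/(cyls L s) !hom_cyls.
  by move=> /M0 [i]; rewrite hom_leE; exists i.
- move=> n x y z; have [[? ? ? ?] [? ? ? ? ?]] := M1 n (h n x) (h n y) (h n z).
  by split; split; apply: inj_h; rewrite ?homE.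
- move=> n k alpha x y; have [? ? ? ?] := M2 n k alpha (h n x) (h n y).
  by split; apply: inj_h; rewrite ?homE.
- by move=> n k m alpha beta r; apply: inj_h; rewrite ?homE.
- by move=> n r; apply: inj_h; rewrite ?homE.
- by move=> n k alpha r; apply: inj_h; rewrite ?homE.
- by move=> n r; have [? ?] := M6 n (h n r); split; apply: inj_h; rewrite ?homE.
Qed.
End Embedding.

Lemma set_boolean_algebra (T : Type) :
  boolean_algebra (fun P Q x => P x /\ Q x) (fun P Q x => P x \/ Q x)
    (fun P x => ~ P x) (fun _ : T => False) (fun _ => True).
Proof.
have predE (P Q : T -> Prop) : (forall x, P x <-> Q x) -> P = Q.
  by move=> PQ; apply: funext => x; apply: propext.
split=> *; apply: predE => x; try tauto; split=> // _; exact: EM.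
Qed.

Section SetUltrafilter.
Variables (T : Type) (U : (T -> Prop) -> Prop).
Hypothesis ultraU : is_ultrafilter (fun P Q x => P x /\ Q x) (fun P x => ~ P x)
  (fun _ : T => False) (fun _ => True) U.

Lemma set_ultra_congr (C P Q : T -> Prop) :
  U C -> (forall x, C x -> (P x <-> Q x)) -> U P <-> U Q.
Proof.
have hB := set_boolean_algebra T.
have up (P' Q' : T -> Prop) : U P' -> (forall x, P' x -> Q' x) -> U Q'.
  move=> UP' PQ'; apply: (ultra_up ultraU UP'); apply: funext => x.
  by apply: propext; split=> [Px|[]//]; split=> //; apply: PQ'.
move=> UC CPQ; split=> UR.
- by apply: up (proj2 (ultra_capE hB ultraU C P) (conj UC UR)) _ => x [/CPQ <-].
- by apply: up (proj2 (ultra_capE hB ultraU C Q) (conj UC UR)) _ => x [/CPQ ->].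
Qed.
End SetUltrafilter.

Section Representation.
Variable L : qfalg.
Hypothesis axL : qf_axioms L.

Lemma sort_boolean_algebra n :
  boolean_algebra (@meet L n) (@join L n) (@neg L n) (zero L n) (one L n).
Proof.
have [_ ax1L _ _ [_ _ ax6L]] := axL.
split=> [x y z|x y z|x y|x y|x y|x y|x y z|x|x|x|x];
  try have [[? ? ? ?] [? ? ? ? ?]] := ax1L n x y z;
  try have [[? ? ? ?] [? ? ? ? ?]] := ax1L n x y x;
  try have [[? ? ? ?] [? ? ? ? ?]] := ax1L n x x x;
  by case: (ax6L n x).
Qed.

Local Notation BA := (sort_boolean_algebra _).

Section Substitution.
Variables (n k : nat) (alpha : {ffun 'I_n -> 'I_k}).

Lemma subst0 : subst alpha (zero L n) = zero L k.
Proof. by case: axL => _ _ ax2L _ _; case: (ax2L n k alpha (zero L n) (zero L n)). Qed.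

Lemma subst1 : subst alpha (one L n) = one L k.
Proof. by case: axL => _ _ ax2L _ _; case: (ax2L n k alpha (zero L n) (zero L n)). Qed.

Lemma substU (x y : car L n) :
  subst alpha (join x y) = join (subst alpha x) (subst alpha y).
Proof. by case: axL => _ _ ax2L _ _; case: (ax2L n k alpha x y). Qed.

Lemma substI (x y : car L n) :
  subst alpha (meet x y) = meet (subst alpha x) (subst alpha y).
Proof. by case: axL => _ _ ax2L _ _; case: (ax2L n k alpha x y). Qed.

Lemma substN (x : car L n) : subst alpha (neg x) = neg (subst alpha x).
Proof. by case: axL => _ _ _ _ [_ ax5L _]; apply: ax5L. Qed.

Lemma subst_comp m (beta : {ffun 'I_k -> 'I_m}) (x : car L n) :
  subst (scomp beta alpha) x = subst beta (subst alpha x).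
Proof. by case: axL => _ _ _ ax3L _; apply: ax3L. Qed.
End Substitution.

Definition sort_ultrafilter n (U : car L n -> Prop) :=
  is_ultrafilter (@meet L n) (@neg L n) (zero L n) (one L n) U.

Lemma ultra_bigmeet n (U : car L n -> Prop) (I : eqType) (s : seq I) (F : I -> car L n) :
  sort_ultrafilter U -> U (bigmeet [seq F i | i <- s]) -> forall i, i \in s -> U (F i).
Proof.
move=> ultraU; elim: s => //= j s IH /(ultra_capE BA ultraU) [UFj UFs] i.
by rewrite in_cons => /orP[/eqP->//|/(IH UFs)].
Qed.

Definition block := {n : nat & {t : car L n | t <> zero L n}}.
Definition point := {b : block & 'I_(projT1 b)}.

Definition block_tuple (b : block) : 'I_(projT1 b) -> point :=
  fun l => existT (fun b => 'I_(projT1 b)) b l.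
Arguments block_tuple : clear implicits.

Definition subfamily m k (g : 'I_k -> block) (f : 'I_m -> block) :=
  forall a, exists i, f i = g a.

Section Family.
Variables (m : nat) (f : 'I_m -> block).

Definition arity i := projT1 (f i).
Definition width := \sum_(i < m) arity i.

Definition family_meet : car L width :=
  bigmeet [seq subst (cyl arity i) (sval (projT2 (f i))) | i <- enum 'I_m].

Lemma family_meet_neq0 : family_meet <> zero L width.
Proof.
have [ax0L _ _ _ _] := axL.
move=> meet0.
have [i /(sub_bot BA)] : exists i, le (sval (projT2 (f i))) (zero L (arity i)).
  apply: ax0L; rewrite -/family_meet meet0 /le.
  suff -> : bigjoin [seq subst (cyl arity i) (zero L (arity i)) | i <- enum 'I_m] =
    zero L width by rewrite (capxx BA).
  by elim: (enum 'I_m) => //= i s ->; rewrite subst0 (cupx0 BA).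
by case: (projT2 (f i)).
Qed.

Let family_type_spec := cid2 (ultrafilter_of_neq0 BA family_meet_neq0).

Definition family_type : car L width -> Prop := sval family_type_spec.

Lemma family_type_ultra : sort_ultrafilter family_type.
Proof. exact: (svalP family_type_spec).1. Qed.

Lemma family_type_cyl i : family_type (subst (cyl arity i) (sval (projT2 (f i)))).
Proof.
apply: (ultra_bigmeet (F := fun i => subst (cyl arity i) (sval (projT2 (f i))))
  family_type_ultra _ (mem_enum _ i)).
exact: (svalP family_type_spec).2.
Qed.

(* A block may occur several times in [f]; its points are placed in the slots
   of its first occurrence (and all other points at the junk position 0). *)
Definition first_index (b : block) : option 'I_m := [pick i | `[< f i = b >] ].

Definition position (w : point) : nat :=
  if first_index (projT1 w) is Some i then val (projT2 w) + offset arity i else 0.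

Lemma first_indexP (b : block) :
  (exists i, f i = b) -> exists2 i, first_index b = Some i & f i = b.
Proof.
move=> [i fi]; rewrite /first_index; case: pickP => [j /asboolP fj|/(_ i)].
  by exists j.
by rewrite asboolT.
Qed.

Lemma position_lt (w : point) : (exists i, f i = projT1 w) -> (position w < width)%N.
Proof.
move=> /first_indexP [i first_i fi]; rewrite /position first_i.
have lt_w : (val (projT2 w) < arity i)%N by rewrite /arity fi ltn_ord.
exact: (cyl_lt (Ordinal lt_w)).
Qed.

Definition holds k (x : 'I_k -> point) (r : car L k) :=
  exists2 s : {ffun 'I_k -> 'I_width},
    forall a, val (s a) = position (x a) & family_type (subst s r).

Section CoveredTuple.
Variables (k : nat) (x : 'I_k -> point).
Hypothesis cover : subfamily (fun a => projT1 (x a)) f.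

Definition positions : {ffun 'I_k -> 'I_width} :=
  [ffun a => Ordinal (position_lt (cover a))].

Lemma holdsE r : holds x r <-> family_type (subst positions r).
Proof.
split=> [[s sE Usr]|]; last by exists positions => // a; rewrite ffunE.
suff -> : positions = s by [].
by apply/ffunP => a; apply: val_inj; rewrite ffunE sE.
Qed.

Lemma holdsI r r' : holds x (meet r r') <-> holds x r /\ holds x r'.
Proof. rewrite !holdsE substI; exact: (ultra_capE BA family_type_ultra). Qed.

Lemma holdsU r r' : holds x (join r r') <-> holds x r \/ holds x r'.
Proof. by rewrite !holdsE substU; exact: (ultra_cupE BA family_type_ultra). Qed.

Lemma holdsN r : holds x (neg r) <-> ~ holds x r.
Proof. by rewrite !holdsE substN; exact: (ultra_complE BA family_type_ultra). Qed.

Lemma holds0 : ~ holds x (zero L k).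
Proof. by rewrite holdsE subst0; exact: ultra_bot family_type_ultra. Qed.

Lemma holds1 : holds x (one L k).
Proof. by rewrite holdsE subst1; apply: ultra_top family_type_ultra. Qed.

End CoveredTuple.

Lemma holds_subst k (x : 'I_k -> point) (cover : subfamily (fun a => projT1 (x a)) f)
    n (alpha : {ffun 'I_n -> 'I_k}) r :
  holds (fun a => x (alpha a)) r <-> holds x (subst alpha r).
Proof.
have cover_alpha : subfamily (fun a => projT1 (x (alpha a))) f by move=> a; apply: cover.
rewrite (holdsE cover_alpha) (holdsE cover) -subst_comp.
suff -> : positions cover_alpha = scomp (positions cover) alpha by [].
by apply/ffunP => a; apply: val_inj; rewrite !ffunE.
Qed.

Lemma holds_block (b : block) :
  (exists i, f i = b) -> holds (block_tuple b) (sval (projT2 b)).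
Proof.
move=> /first_indexP [i first_i fi]; subst b.
exists (cyl arity i); last exact: family_type_cyl.
by move=> l; rewrite /position /= first_i ffunE.
Qed.
End Family.

Definition family := {m : nat & 'I_m -> block}.

(* Families are directed by inclusion; [eventually] is the filter generated by
   the final segments, and [satisfies] below is the ultraproduct over it. *)
Definition eventually (P : family -> Prop) :=
  exists k (g : 'I_k -> block), forall j, subfamily g (projT2 j) -> P j.

Local Notation set_cap := (fun (P Q : family -> Prop) j => P j /\ Q j).

Lemma eventually_filter : is_filter set_cap (fun _ => True) eventually.
Proof.
split.
- by exists 0, (ffun0 (card_ord 0)).
- move=> P Q [k1 [g1 evP]] [k2 [g2 evQ]].
  pose g a := match split a with inl a1 => g1 a1 | inr a2 => g2 a2 end.
  exists (k1 + k2), g => j sub_g; split.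
  + by apply: evP => a; have := sub_g (lshift k2 a); rewrite /g (unsplitK (inl a)).
  + by apply: evQ => a; have := sub_g (rshift k1 a); rewrite /g (unsplitK (inr a)).
- by move=> P Q [k [g evP]] PQ; exists k, g => j /evP; rewrite PQ => -[].
Qed.

Lemma eventually_proper : ~ eventually (fun _ => False).
Proof. by case=> k [g /(_ (existT _ k g))]; apply=> a; exists a. Qed.

Let limit_spec := cid2 (ultrafilter_ext (set_boolean_algebra family)
  eventually_filter eventually_proper).

Definition limit : (family -> Prop) -> Prop := sval limit_spec.

Lemma limit_ultra : is_ultrafilter set_cap (fun P j => ~ P j) (fun _ => False)
  (fun _ => True) limit.
Proof. exact: (svalP limit_spec).1. Qed.

Lemma limit_eventually P : eventually P -> limit P.
Proof. exact: (svalP limit_spec).2. Qed.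

Definition satisfies k (x : 'I_k -> point) (r : car L k) :=
  limit (fun j => holds (projT2 j) x r).

Lemma limit_covers k (x : 'I_k -> point) :
  limit (fun j => subfamily (fun a => projT1 (x a)) (projT2 j)).
Proof. by apply: limit_eventually; exists k, (fun a => projT1 (x a)). Qed.

Section Satisfaction.
Variables (k : nat) (x : 'I_k -> point).

Local Notation SBA := (set_boolean_algebra family).

Lemma limit_congr (P Q : family -> Prop) :
  (forall j, subfamily (fun a => projT1 (x a)) (projT2 j) -> (P j <-> Q j)) ->
  limit P <-> limit Q.
Proof. exact: (set_ultra_congr limit_ultra (limit_covers x)). Qed.

Lemma satisfiesI r r' : satisfies x (meet r r') <-> satisfies x r /\ satisfies x r'.
Proof.
rewrite -(ultra_capE SBA limit_ultra); apply: limit_congr => j cover.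
exact: holdsI.
Qed.

Lemma satisfiesU r r' : satisfies x (join r r') <-> satisfies x r \/ satisfies x r'.
Proof.
rewrite -(ultra_cupE SBA limit_ultra); apply: limit_congr => j cover.
exact: holdsU.
Qed.

Lemma satisfiesN r : satisfies x (neg r) <-> ~ satisfies x r.
Proof.
rewrite -(ultra_complE SBA limit_ultra); apply: limit_congr => j cover.
exact: holdsN.
Qed.

Lemma satisfies0 : ~ satisfies x (zero L k).
Proof.
rewrite /satisfies (limit_congr (Q := fun _ => False)).
  exact: ultra_bot limit_ultra.
by move=> j cover; split=> // /(holds0 cover).
Qed.

Lemma satisfies1 : satisfies x (one L k).
Proof.
rewrite /satisfies (limit_congr (Q := fun _ => True)).
  exact: ultra_top limit_ultra.
by move=> j cover; split=> // _; apply: holds1.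
Qed.

Lemma satisfies_subst n (alpha : {ffun 'I_n -> 'I_k}) r :
  satisfies (fun a => x (alpha a)) r <-> satisfies x (subst alpha r).
Proof. by apply: limit_congr => j cover; apply: holds_subst. Qed.
End Satisfaction.

Definition represent n (r : car L n) : car (A point) n := fun x => satisfies x r.

Lemma represent_hom : is_hom represent.
Proof.
have predE n (P Q : car (A point) n) : (forall x, P x <-> Q x) -> P = Q.
  by move=> PQ; apply: funext => x; apply: propext.
split=> [n k alpha r|n|n|n r r'|]; try split=> [n r r'|n r];
  apply: predE => x /=.
- exact: iff_sym (satisfies_subst x alpha r).
- by split=> // /satisfies0.
- by split=> // _; apply: satisfies1.
- exact: satisfiesU.
- exact: satisfiesI.
- exact: satisfiesN.
Qed.

Lemma satisfies_neq0 n (r : car L n) : r <> zero L n -> exists x, satisfies x r.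
Proof.
move=> r0; pose b : block := existT _ n (exist _ r r0).
exists (block_tuple b); apply: limit_eventually; exists 1, (fun _ => b) => j sub_b.
exact: (holds_block (sub_b ord0)).
Qed.

Lemma represent_inj n : injective (@represent n).
Proof.
move=> r s rs; apply: contrapT => /(neq_cap_compl BA) [] /satisfies_neq0 [x].
- by move=> /satisfiesI [rx /satisfiesN]; rewrite -[satisfies x s]/(represent s x) -rs.
- by move=> /satisfiesI [sx /satisfiesN]; rewrite -[satisfies x r]/(represent r x) rs.
Qed.

End Representation.

Theorem theorem4p1 (L : qfalg) :
  qf_axioms L <-> exists W : Type, embeds L (A W).
Proof.
split=> [axL|[W [h [hom_h inj_h]]]].
  exists (point L), (represent axL).
  by split; [exact: represent_hom|exact: represent_inj].
exact: hom_qf_axioms hom_h inj_h (A_qf_axioms W).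
Qed.
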